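(* For $1\le\ell\le n$ let $s_{n,\ell}$ be the number of permutations $\sigma$ of $\{1,\dots,n\}$ avoiding both $1324$ and $2134$ with $\sigma(n)=\ell$. Then $h(x,u)=\sum_{n=1}^\infty\sum_{\ell=1}^n s_{n,\ell}u^\ell x^n$ is given by \[ h(x,u)=\frac{2ux(1-u)(1-ux)+ux\big(1-u(1-u)x\big)\big(1-x-\sqrt{1-6x+x^2}\big)}{2\big(1-u(1+x)+2u^2x\big)}. \] In particular, \[ h(x,1)=\frac{1-x-\sqrt{1-6x+x^2}}{2}, \] so the number of permutations of $\{1,\dots,n\}$ avoiding $1324$ and $2134$ is the $n$-th large Schröder number.
   Context: A permutation avoids a pattern $p$ if no subsequence of its one-line notation is order-isomorphic to $p$. The large Schröder numbers $1,2,6,22,90,\dots$ (for $n=1,2,\dots$) have generating function $\frac{1-x-\sqrt{1-6x+x^2}}{2}$ without constant term. *)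

From mathcomp Require Import all_boot all_order all_algebra all_fingroup.
Set Implicit Arguments. Unset Strict Implicit. Unset Printing Implicit Defensive.
Import GRing.Theory.
Local Open Scope ring_scope.

(* Permutations of {1..n} are modelled (0-based) as {perm 'I_n}; the one-line
   notation of s is s 0, s 1, ..., s (n-1).  A pattern of length k is given by
   its values p : 'I_k -> nat (1-based, as written). s contains p iff there are
   positions f 0 < ... < f (k-1) whose values are order-isomorphic to p. *)
Definition contains (n k : nat) (s : {perm 'I_n}) (p : 'I_k -> nat) : bool :=
  [exists f : {ffun 'I_k -> 'I_n},
    [forall a : 'I_k, forall b : 'I_k,
      ((a < b)%N ==> (f a < f b)%N) && (((s (f a) < s (f b))%N) == (p a < p b)%N)]].

Definition avoids (n k : nat) (s : {perm 'I_n}) (p : 'I_k -> nat) : bool :=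
  ~~ contains s p.

Definition pat1324 : 'I_4 -> nat := fun i => nth 0%N [:: 1; 3; 2; 4]%N i.
Definition pat2134 : 'I_4 -> nat := fun i => nth 0%N [:: 2; 1; 3; 4]%N i.

Definition avoiders (n : nat) : {set {perm 'I_n}} :=
  [set s : {perm 'I_n} | avoids s pat1324 && avoids s pat2134].

(* s_{n,l}: those with sigma(n) = l (1-based), i.e. s (n-1) = l-1 (0-based) *)
Definition snl (n l : nat) : nat :=
  #|[set s in avoiders n |
      [exists i : 'I_n, (val i == n.-1) && (val (s i) == l.-1)]]|.

(* A series is its coefficient sequence; the variable u is 'X of {poly rat}. *)
Definition fps := nat -> {poly rat}.

Definition fadd (f g : fps) : fps := fun n => f n + g n.
Definition fsub (f g : fps) : fps := fun n => f n - g n.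
Definition fmul (f g : fps) : fps :=
  fun n => \sum_(i < n.+1) f i * g (n - i)%N.
Definition fconst (c : {poly rat}) : fps := fun n => if n == 0%N then c else 0.
Definition fX : fps := fun n => if n == 1%N then 1 else 0.
Definition fU : fps := fconst 'X.
Definition fone : fps := fconst 1.
Definition ftwo : fps := fconst 2%:R.
Definition feq (f g : fps) : Prop := forall n, f n = g n.

Definition fat1 (f : fps) : fps := fun n => ((f n).[1])%:P.

Declare Scope fps_scope.
Delimit Scope fps_scope with fps.
Infix "+" := fadd : fps_scope.
Infix "-" := fsub : fps_scope.
Infix "*" := fmul : fps_scope.
Infix "==" := feq (at level 70) : fps_scope.

(* Q is "sqrt(1 - 6x + x^2)": the formal power series with constant term 1
   whose square is 1 - 6x + x^2. *)
Definition is_sqrt_schroder (Q : fps) : Prop :=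
  Q 0%N = 1 /\ (Q * Q == fone - fconst 6%:R * fX + fX * fX)%fps.

Definition hser : fps :=
  fun n => \sum_(1 <= l < n.+1) (snl n l)%:R *: 'X^l.

(* Appending a last value [l] to a {1324, 2134}-avoider [t] creates an
   occurrence exactly when [t] has a 132 or a 213 whose values are all below
   [l], so the admissible values form an initial segment [0 .. label t].  If
   [b] is the least value that is the larger entry of an inversion of [t]
   (or [|t|] if there is none), the children of a permutation with label [K]
   get the labels [K+1], [2 .. b], [K+1], [b+1 .. K]: the same multiset for
   every [b].  Hence [F(x,u) = sum_t u^(label t) x^|t|] and [h(x,u)] satisfy
     [K F = (1 - u) + x u^2 F(x,1)] and [(1 - u) h = x u F(x,1) - x u^2 F]
   with kernel [K = 1 - u - x u + 2 x u^2].  Instead of substituting a root of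
   the kernel, one checks that the deviations of [F] and [F(x,1)] from their
   closed forms, [F = N / S] and [2 F(x,1) = 2 + T] with
   [T = 1 - x - sqrt(1 - 6x + x^2)], satisfy a homogeneous linear system that
   determines their coefficients one power of [x] at a time; so both vanish,
   and the formula for [h] follows. *)

From HB Require Import structures.
From mathcomp Require Import all_boot all_order all_algebra all_fingroup.
From mathcomp Require Import zify ring boolp.
Set Implicit Arguments. Unset Strict Implicit. Unset Printing Implicit Defensive.

(** * Occurrences of 1324 and 2134 *)

Definition has_index n (P : pred nat) := has P (iota 0 n).

Lemma has_indexP n (P : pred nat) : reflect (exists2 k, k < n & P k) (has_index n P).
Proof.
by apply: (iffP hasP) => -[k]; [rewrite mem_iota => /andP[_ kn] | move=> kn];
  exists k; rewrite ?mem_iota.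
Qed.

Lemma has_indexS n (P : pred nat) : has_index n.+1 P = has_index n P || P n.
Proof. by rewrite /has_index -addn1 iotaD has_cat /= orbF. Qed.

Definition has_pair n (r : nat -> nat -> bool) : bool :=
  has_index n (fun j => has_index j (r^~ j)).

Lemma has_pairP n (r : nat -> nat -> bool) :
  reflect (exists i j, [/\ i < j, j < n & r i j]) (has_pair n r).
Proof.
apply: (iffP (has_indexP _ _)) => [[j jn /has_indexP[i ij rij]] | [i [j [ij jn rij]]]].
  by exists i, j.
by exists j => //; apply/has_indexP; exists i.
Qed.

Lemma has_pairU n (r1 r2 : nat -> nat -> bool) :
  has_pair n (fun i j => r1 i j || r2 i j) = has_pair n r1 || has_pair n r2.
Proof.
rewrite /has_pair /has_index -has_predU; apply: eq_has => j /=.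
by rewrite -has_predU; apply: eq_has.
Qed.

Lemma has_pair_andr n (r : nat -> nat -> bool) c :
  has_pair n (fun i j => r i j && c) = has_pair n r && c.
Proof.
apply/has_pairP/andP => [[i [j [ij jn /andP[rij ->]]]] | [/has_pairP[i [j [ij jn rij]]] ->]].
  by split=> //; apply/has_pairP; exists i, j.
by exists i, j; rewrite rij.
Qed.

Lemma eq_has_pair n (r1 r2 : nat -> nat -> bool) :
  (forall i j, i < j -> j < n -> r1 i j = r2 i j) -> has_pair n r1 = has_pair n r2.
Proof.
by move=> e; apply/has_pairP/has_pairP => -[i [j [ij jn rij]]]; exists i, j; rewrite ?e // -e.
Qed.

(* A 132 or a 213 with all values below [b]: exactly what a last entry [b]
   completes to a 1324 or a 2134. *)
Definition occ3 (w : nat -> nat) b i j k :=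
  (w i < w k < w j) && (w j < b) || (w j < w i < w k) && (w k < b).

Definition has_occ3 n w b :=
  has_index n (fun k => has_pair k (fun i j => occ3 w b i j k)).

Definition has_occ4 n (w : nat -> nat) := has_index n (fun l => has_occ3 l w (w l)).

Definition has_inv_below n (w : nat -> nat) b := has_pair n (fun i j => w j < w i < b).

Lemma has_occ3P n w b :
  reflect (exists i j k, [/\ i < j, j < k, k < n & occ3 w b i j k]) (has_occ3 n w b).
Proof.
apply: (iffP (has_indexP _ _)) => [[k kn /has_pairP[i [j [ij jk o]]]] | [i [j [k [ij jk kn o]]]]].
  by exists i, j, k.
by exists k => //; apply/has_pairP; exists i, j.
Qed.

Lemma has_occ4P n w :
  reflect (exists i j k l, [/\ i < j, j < k, k < l, l < n & occ3 w (w l) i j k])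
          (has_occ4 n w).
Proof.
apply: (iffP (has_indexP _ _)) => [[l ln /has_occ3P[i [j [k [ij jk kl o]]]]] | ].
  by exists i, j, k, l.
by case=> i [j [k [l [ij jk kl ln o]]]]; exists l => //; apply/has_occ3P; exists i, j, k.
Qed.

Lemma has_occ3S n w b :
  has_occ3 n.+1 w b = has_occ3 n w b || has_pair n (fun i j => occ3 w b i j n).
Proof. exact: has_indexS. Qed.

Lemma has_occ4S n w : has_occ4 n.+1 w = has_occ4 n w || has_occ3 n w (w n).
Proof. exact: has_indexS. Qed.

Lemma eq_has_occ3 n w w' b b' :
    (forall x y, x < n -> y < n -> (w x < w y) = (w' x < w' y)) ->
    (forall x, x < n -> (w x < b) = (w' x < b')) ->
  has_occ3 n w b = has_occ3 n w' b'.
Proof.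
move=> ew eb; apply/has_occ3P/has_occ3P => -[i [j [k [ij jk kn o]]]]; exists i, j, k;
  by split=> //; move: o; rewrite /occ3 !ew ?eb //; lia.
Qed.

Lemma eq_has_occ4 n w w' :
    (forall x y, x < n -> y < n -> (w x < w y) = (w' x < w' y)) ->
  has_occ4 n w = has_occ4 n w'.
Proof.
move=> ew; apply/has_occ4P/has_occ4P => -[i [j [k [l [ij jk kl ln o]]]]]; exists i, j, k, l;
  by split=> //; move: o; rewrite /occ3 !ew //; lia.
Qed.

Lemma has_occ3_le n w a b : a <= b -> has_occ3 n w a -> has_occ3 n w b.
Proof.
move=> ab /has_occ3P[i [j [k [ij jk kn o]]]]; apply/has_occ3P; exists i, j, k.
by split=> //; move: o; rewrite /occ3; lia.
Qed.

Lemma has_occ3_0 n w : has_occ3 n w 0 = false.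
Proof. by apply/has_occ3P => -[i [j [k [_ _ _]]]]; rewrite /occ3; lia. Qed.

Lemma has_inv_below_le n w a b : a <= b -> has_inv_below n w a -> has_inv_below n w b.
Proof.
by move=> ab /has_pairP[i [j [ij jn o]]]; apply/has_pairP; exists i, j; split=> //; lia.
Qed.

Lemma has_inv_below1 n w : has_inv_below n w 1 = false.
Proof. by apply/has_pairP => -[i [j [_ _]]]; lia. Qed.

Lemma has_occ3_inv n w b : has_occ3 n w b -> has_inv_below n w b.
Proof.
case/has_occ3P=> i [j [k [ij jk kn]]]; rewrite /occ3 => /orP[] o; apply/has_pairP.
  by exists j, k; split=> //; lia.
by exists i, j; split=> //; lia.
Qed.

(* One-line notation, 0-based, with junk value 0 from position [n] on. *)
Definition word n (s : 'S_n) (i : nat) : nat := if insub i is Some o then val (s o) else 0.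

Lemma word_ord n (s : 'S_n) (o : 'I_n) : word s o = s o.
Proof. by rewrite /word valK. Qed.

Lemma word_inj n (s : 'S_n) i j : i < n -> j < n -> word s i = word s j -> i = j.
Proof.
move=> ilt jlt; rewrite -[i]/(val (Ordinal ilt)) -[j]/(val (Ordinal jlt)) !word_ord.
by move/val_inj/perm_inj => ->.
Qed.

Lemma word_onto n (s : 'S_n) v : v < n -> exists2 i, i < n & word s i = v.
Proof. by move=> vlt; exists ((s^-1)%g (Ordinal vlt)) => //; rewrite word_ord permKV. Qed.

Definition at4 (i j k l : nat) (a : 'I_4) := nth 0 [:: i; j; k; l] a.

Lemma contains4P n (s : 'S_n) (p : 'I_4 -> nat) :
  contains s p <-> exists i j k l, [/\ i < j, j < k, k < l, l < n &
    forall a b, (word s (at4 i j k l a) < word s (at4 i j k l b)) = (p a < p b)].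
Proof.
pose o m (h : m < 4) := Ordinal h.
split.
  case/existsP=> f /forallP H; have {}H a b := forallP (H a) b.
  have lt_f (a b : 'I_4) : a < b -> f a < f b by case/andP: (H a b) => /implyP.
  have at4E (a : 'I_4) : at4 (f (o 0 isT)) (f (o 1 isT)) (f (o 2 isT)) (f (o 3 isT)) a = f a.
    by case: a => -[|[|[|[|]]]] ? //=; congr (val (f _)); apply: val_inj.
  exists (f (o 0 isT)), (f (o 1 isT)), (f (o 2 isT)), (f (o 3 isT)).
  split; first [exact: lt_f | exact: ltn_ord | idtac].
  by move=> a b; rewrite !at4E !word_ord; case/andP: (H a b) => _ /eqP.
case=> i [j [k [l [ij jk kl ln H]]]].
have at4_lt a : at4 i j k l a < n by rewrite /at4; case: a => -[|[|[|[|m]]]] ? /=; lia.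
apply/existsP; exists [ffun a => Ordinal (at4_lt a)]; apply/forallP => a; apply/forallP => b.
rewrite !ffunE -!word_ord /= H eqxx andbT.
by apply/implyP; rewrite /at4; case: a b => -[|[|[|[|?]]]] ? [[|[|[|[|?]]]] ?] /=; lia.
Qed.

Lemma contains1324P n (s : 'S_n) : contains s pat1324 <-> exists i j k l,
  [/\ i < j, j < k, k < l, l < n & (word s i < word s k < word s j) && (word s j < word s l)].
Proof.
rewrite contains4P; split=> -[i [j [k [l [ij jk kl ln H]]]]]; exists i, j, k, l; split=> //.
  pose o m (h : m < 4) := Ordinal h.
  move: (H (o 0 isT) (o 2 isT)) (H (o 2 isT) (o 1 isT)) (H (o 1 isT) (o 3 isT)).
  by rewrite /at4 /pat1324 /= => -> -> ->.
case/andP: H => /andP[? ?] ? a b; rewrite /at4 /pat1324.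
by case: a b => -[|[|[|[|?]]]] ? [[|[|[|[|?]]]] ?] /=; lia.
Qed.

Lemma contains2134P n (s : 'S_n) : contains s pat2134 <-> exists i j k l,
  [/\ i < j, j < k, k < l, l < n & (word s j < word s i < word s k) && (word s k < word s l)].
Proof.
rewrite contains4P; split=> -[i [j [k [l [ij jk kl ln H]]]]]; exists i, j, k, l; split=> //.
  pose o m (h : m < 4) := Ordinal h.
  move: (H (o 1 isT) (o 0 isT)) (H (o 0 isT) (o 2 isT)) (H (o 2 isT) (o 3 isT)).
  by rewrite /at4 /pat2134 /= => -> -> ->.
case/andP: H => /andP[? ?] ? a b; rewrite /at4 /pat2134.
by case: a b => -[|[|[|[|?]]]] ? [[|[|[|[|?]]]] ?] /=; lia.
Qed.

Lemma avoidersE n (s : 'S_n) : (s \in avoiders n) = ~~ has_occ4 n (word s).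
Proof.
rewrite inE /avoids -negb_or; congr negb; apply/idP/has_occ4P.
  by case/orP=> [/contains1324P | /contains2134P] [i [j [k [l [? ? ? ? o]]]]];
    exists i, j, k, l; rewrite /occ3 o ?orbT.
case=> i [j [k [l [? ? ? ? /orP[] o]]]]; apply/orP; [left | right].
  by apply/contains1324P; exists i, j, k, l.
by apply/contains2134P; exists i, j, k, l.
Qed.

Lemma ltn_bump2 h i j : (bump h i < bump h j) = (i < j).
Proof. by rewrite !ltnNge leq_bump2. Qed.

Section Extension.
Variables (n : nat) (t : 'S_n) (l : 'I_n.+1).
Local Notation s := (lift_perm ord_max l t).

Lemma word_lift i : i < n -> word s i = bump l (word t i).
Proof.
move=> ilt; have -> : i = lift ord_max (Ordinal ilt) by rewrite lift_max.
by rewrite word_ord lift_perm_lift [in RHS]lift_max word_ord.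
Qed.

Lemma word_lift_last : word s n = l.
Proof. by rewrite -[n]/(val (@ord_max n)) word_ord lift_perm_id. Qed.

Lemma word_lift_mono x y :
  x < n -> y < n -> (word s x < word s y) = (word t x < word t y).
Proof. by move=> ? ?; rewrite !word_lift // ltn_bump2. Qed.

Lemma avoiders_lift : (s \in avoiders n.+1) = (t \in avoiders n) && ~~ has_occ3 n (word t) l.
Proof.
rewrite !avoidersE has_occ4S negb_or word_lift_last (eq_has_occ4 word_lift_mono).
congr (_ && ~~ _); apply: eq_has_occ3 => [|x xn]; first exact: word_lift_mono.
by rewrite word_lift // /bump; case: leqP; lia.
Qed.

Lemma occ3_lift_last b i j : i < j -> j < n -> occ3 (word s) b i j n =
  (word t i < l <= word t j) && (word t j + 2 <= b) || (word t j < word t i < l) && (l < b).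
Proof.
move=> ij jn; rewrite /occ3 word_lift_last !word_lift ?(ltn_trans ij) // /bump.
by case: leqP; case: leqP => /= *; apply/idP/idP; lia.
Qed.

End Extension.

(** * The generating tree *)

Lemma bigmax_down_closed N (P : pred nat) :
    P 0 -> (forall a b, a <= b -> P b -> P a) ->
  forall b, b <= N -> P b = (b <= \max_(c < N.+1 | P c) c).
Proof.
move=> P0 Pdown b bN; set M := \max_(c < N.+1 | P c) c.
have PM : P M.
  have nonempty : 0 < #|(fun c : 'I_N.+1 => P c)| by apply/card_gt0P; exists ord0.
  have [c Pc Mc] := eq_bigmax_cond val nonempty.
  by have -> : M = c by exact: Mc.
apply/idP/idP => [Pb | /Pdown]; last exact.
exact: (leq_bigmax_cond (Ordinal (bN : b < N.+1))).
Qed.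

(* [label t + 1] is the number of values that can be appended to [t] without
   creating a 1324 or a 2134; the values below [inv_bound t] occur in [t] in
   increasing order. *)
Definition appendable n (t : 'S_n) b := ~~ has_occ3 n (word t) b.
Definition label n (t : 'S_n) := \max_(b < n.+1 | appendable t b) b.
Definition inv_free n (t : 'S_n) b := ~~ has_inv_below n (word t) b.
Definition inv_bound n (t : 'S_n) := \max_(b < n.+1 | inv_free t b) b.

Definition has_ascent_across n (w : nat -> nat) l b :=
  has_pair n (fun i j => (w i < l <= w j) && (w j + 2 <= b)).

Section Labels.
Variables (n : nat) (t : 'S_n).

Lemma label_le : label t <= n.
Proof. by apply/bigmax_leqP => b _; rewrite -ltnS. Qed.

Lemma inv_bound_le : inv_bound t <= n.
Proof. by apply/bigmax_leqP => b _; rewrite -ltnS. Qed.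

Lemma appendableE b : b <= n -> appendable t b = (b <= label t).
Proof.
apply: bigmax_down_closed => [|a c ac]; first by rewrite /appendable has_occ3_0.
by apply: contra; apply: has_occ3_le.
Qed.

Lemma inv_freeE b : b <= n -> inv_free t b = (b <= inv_bound t).
Proof.
apply: bigmax_down_closed => [|a c ac].
  by apply/negP => /(has_inv_below_le (leq0n 1)); rewrite has_inv_below1.
by apply: contra; apply: has_inv_below_le.
Qed.

Lemma has_occ3E c : c <= n -> has_occ3 n (word t) c = (label t < c).
Proof. by move=> cn; rewrite ltnNge -appendableE // negbK. Qed.

Lemma has_inv_belowE c : c <= n -> has_inv_below n (word t) c = (inv_bound t < c).
Proof. by move=> cn; rewrite ltnNge -inv_freeE // negbK. Qed.

Lemma label_eq c :
  c <= n -> appendable t c -> (c < n -> ~~ appendable t c.+1) -> label t = c.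
Proof.
move=> cn; rewrite appendableE // => cK next.
apply/eqP; rewrite eqn_leq cK andbT leqNgt; apply/negP => cK'.
have cn' : c < n by have := label_le; lia.
by move: (next cn'); rewrite appendableE // cK'.
Qed.

Lemma inv_bound_le_label : inv_bound t <= label t.
Proof.
have : inv_free t (inv_bound t) by rewrite inv_freeE ?inv_bound_le.
by rewrite -appendableE ?inv_bound_le //; apply: contra; apply: has_occ3_inv.
Qed.

Lemma inv_bound_gt0 : 0 < label t -> 0 < inv_bound t.
Proof.
by move=> K0; rewrite -(inv_freeE (b:=1)) /inv_free ?has_inv_below1 //; have := label_le; lia.
Qed.

(* The entry [inv_bound t] heads the smallest inversion of [t]; an ascent
   across it below [label t] would complete a 132 or a 213, or an inversion
   below [inv_bound t]. *)
Lemma no_ascent_across_inv_bound :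
  0 < inv_bound t -> ~~ has_ascent_across n (word t) (inv_bound t) (label t).+1.
Proof.
set b := inv_bound t; set K := label t; set w := word t => b0.
have Kn := label_le.
have no_inv x y : x < y -> y < n -> w y < w x -> b <= w x.
  move=> xy yn wyx; rewrite leqNgt; apply/negP => wxb.
  suff : b < b by rewrite ltnn.
  by rewrite -has_inv_belowE ?inv_bound_le //; apply/has_pairP; exists x, y; rewrite wyx wxb.
have no_occ3 x y z c : x < y -> y < z -> z < n -> c <= n -> occ3 w c x y z -> K < c.
  by move=> xy yz zn cn o; rewrite -has_occ3E //; apply/has_occ3P; exists x, y, z.
apply/has_pairP => -[i [j [ij jn /andP[/andP[wib bwj] wjK]]]].
have /has_pairP[i' [j' [i'j' j'n /andP[wj'i' wi'b]]]] : has_inv_below n w b.+1.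
  by rewrite has_inv_belowE //; lia.
have wi' : w i' = b by have := no_inv i' j' i'j' j'n wj'i'; lia.
have wjn : w j < n by rewrite /w -[j]/(val (Ordinal jn)) word_ord.
case: (ltngtP i i') => [ii' | i'i | eii']; last by move: wib; rewrite eii'; lia.
  case: (ltngtP (w i) (w j')) => [wij' | wj'i | /word_inj eij']; last by lia.
  - by have := no_occ3 i i' j' b.+1 ii' i'j' j'n; rewrite /occ3; lia.
  - by have := no_inv i j' (ltn_trans ii' i'j') j'n wj'i; lia.
have bj : b < w j by case: ltngtP bwj => // /esym; rewrite -wi' => /word_inj; lia.
by have := no_occ3 i' i j (w j).+1 i'i ij jn; rewrite /occ3; lia.
Qed.

End Labels.

Lemma has_ascent_across_le n w l c : c <= l.+1 -> has_ascent_across n w l c = false.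
Proof. by move=> cl; apply/has_pairP => -[i [j [_ _ r]]]; lia. Qed.

Definition child_label K b l :=
  if l == 0 then K.+1 else if l < b then l.+1 else if l == b then K.+1 else l.

Section LabelLift.
Variables (n : nat) (t : 'S_n) (l : 'I_n.+1).
Local Notation s := (lift_perm ord_max l t).

Lemma appendable_lift b : appendable s b =
  [&& appendable t (if b <= l then b else b.-1), ~~ has_ascent_across n (word t) l b
    & ~~ (has_inv_below n (word t) l && (l < b))].
Proof.
rewrite /appendable has_occ3S negb_or.
rewrite (@eq_has_occ3 _ _ (word t) _ (if b <= l then b else b.-1)); last first.
- move=> x xn; rewrite word_lift // /bump.
  by case: (leqP l (word t x)); case: (leqP b l) => /= *; apply/idP/idP; lia.
- exact: word_lift_mono.
congr (_ && _); rewrite -negb_or -has_pair_andr -has_pairU; congr negb.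
by apply: eq_has_pair => i j; apply: occ3_lift_last.
Qed.

Hypothesis lK : l <= label t.

Let Kn := label_le t.
Let ln : l <= n := leq_trans lK Kn.

Lemma label_lift0 : l = 0 :> nat -> label s = (label t).+1.
Proof.
move=> l0; apply: label_eq; first lia.
  rewrite appendable_lift l0 /= appendableE // leqnn ltn0Sn andbT /=.
  by apply/andP; split; apply/negP => /has_pairP[i [j [_ _ r]]]; lia.
by move=> Kn'; rewrite appendable_lift l0 /= appendableE //; lia.
Qed.

Lemma label_lift_lt : 0 < l < inv_bound t -> label s = l.+1.
Proof.
case/andP=> l0 lb; have bn := inv_bound_le t.
apply: label_eq; first lia.
  rewrite appendable_lift ltnn /= appendableE // has_ascent_across_le //.
  by rewrite has_inv_belowE //; lia.
move=> _; suff ascent : has_ascent_across n (word t) l l.+2.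
  by rewrite appendable_lift ascent andbF.
have [q qn wq] := word_onto t (leq_trans lb bn).
have [p pn wp] := word_onto t (leq_ltn_trans (leq0n l) (leq_trans lb bn)).
apply/has_pairP; case: (ltngtP p q) => [pq | qp | epq].
- by exists p, q; rewrite wp wq; split=> //; lia.
- have := has_inv_belowE t bn; rewrite ltnn => /negP; case.
  by apply/has_pairP; exists q, p; rewrite wp wq; split=> //; lia.
- by move: wq; rewrite -epq wp; lia.
Qed.

Lemma label_lift_eq : 0 < l -> l = inv_bound t :> nat -> label s = (label t).+1.
Proof.
move=> l0 lb; apply: label_eq; first lia.
  rewrite appendable_lift leqNgt ltnS lK /= appendableE // leqnn /= andbT.
  rewrite has_inv_belowE // lb ltnn no_ascent_across_inv_bound //; lia.
by move=> Kn'; rewrite appendable_lift leqNgt ltnS (leq_trans lK) //= appendableE //; lia.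
Qed.

Lemma label_lift_gt : inv_bound t < l -> label s = l.
Proof.
move=> bl; apply: label_eq; first lia.
  by rewrite appendable_lift leqnn /= appendableE // lK has_ascent_across_le // ltnn andbF.
by move=> _; rewrite appendable_lift ltnn /= has_inv_belowE //; lia.
Qed.

Lemma label_lift : label s = child_label (label t) (inv_bound t) l.
Proof.
rewrite /child_label; case: eqP => [/label_lift0 // | /eqP l0].
case: ltnP => [lb | bl]; first by apply: label_lift_lt; rewrite lb lt0n l0.
case: eqP => [lb | /eqP nb].
  by apply: label_lift_eq; lia.
by apply: label_lift_gt; lia.
Qed.

End LabelLift.

Import GRing.Theory.
Local Open Scope ring_scope.

Section GeometricSums.
Variables (R : comPzRingType) (x : R).

Lemma sum_expr_telescope a c :
  (a <= c)%N -> (1 - x) * \sum_(a <= l < c) x ^+ l = x ^+ a - x ^+ c.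
Proof.
move=> ac; rewrite mulr_sumr (@telescope_sumr_eq _ _ _ (fun l => - x ^+ l)) //; first ring.
by move=> l _; rewrite exprS; ring.
Qed.

Lemma sum_child_label K b : (0 < K -> 0 < b)%N -> (b <= K)%N ->
  (1 - x) * \sum_(l < K.+1) x ^+ child_label K b l = x ^+ 2 + (1 - 2%:R * x) * x ^+ K.+1.
Proof.
case: K => [_ _ | K b0 bK]; first by rewrite big_ord1 /child_label /=; ring.
case: b b0 bK => [/(_ isT) //| b] _ bK.
rewrite -(big_mkord xpredT (fun l => x ^+ child_label K.+1 b.+1 l)) big_nat_recl //.
rewrite (@big_cat_nat _ _ _ b) ?(ltnW bK) // (@big_ltn _ _ _ b) //=.
rewrite (eq_big_nat _ _ (F2 := fun i => x ^+ 2 * x ^+ i)); last first.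
  by move=> i /andP[_ ib]; rewrite /child_label /= ltnS ib -exprD add2n.
rewrite (eq_big_nat _ _ (F2 := fun i => x * x ^+ i) (m := b.+1)); last first.
  move=> i /andP[bi _].
  by rewrite /child_label /= ltnS ltnNge (ltnW bi) eqSS (gtn_eqF bi) -exprS.
rewrite /child_label /= ltnn eqxx -!mulr_sumr.
set S1 := \sum_(0 <= i < b) _; set S2 := \sum_(b.+1 <= i < K.+1) _.
transitivity (x ^+ 2 * ((1 - x) * S1) + x * ((1 - x) * S2) + 2%:R * (1 - x) * x ^+ K.+2).
  by ring.
by rewrite !sum_expr_telescope // !exprS; ring.
Qed.
End GeometricSums.

Section PermUnlift.
Variables (n : nat) (i : 'I_n.+1).

Definition perm_unlift_fun (s : 'S_n.+1) (k : 'I_n) := odflt k (unlift (s i) (s (lift i k))).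

Lemma lift_perm_unlift_fun (s : 'S_n.+1) k : lift (s i) (perm_unlift_fun s k) = s (lift i k).
Proof.
rewrite /perm_unlift_fun; case: unliftP => [k' -> // | /perm_inj /eqP].
by rewrite eq_sym (negbTE (neq_lift i k)).
Qed.

Lemma perm_unlift_fun_inj (s : 'S_n.+1) : injective (perm_unlift_fun s).
Proof.
move=> a b /(congr1 (lift (s i))); rewrite !lift_perm_unlift_fun.
by move/perm_inj/lift_inj.
Qed.

Definition perm_unlift (s : 'S_n.+1) : 'S_n := perm (@perm_unlift_fun_inj s).

Lemma lift_perm_unlift (s : 'S_n.+1) : lift_perm i (s i) (perm_unlift s) = s.
Proof.
apply/permP => k; case: (unliftP i k) => [k' -> | ->]; last by rewrite lift_perm_id.
by rewrite lift_perm_lift permE lift_perm_unlift_fun.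
Qed.

Lemma perm_unlift_lift j (t : 'S_n) : perm_unlift (lift_perm i j t) = t.
Proof.
apply/permP => k; apply: (@lift_inj _ j); rewrite permE.
by rewrite -{1}(lift_perm_id i j t) lift_perm_unlift_fun lift_perm_lift.
Qed.

Lemma reindex_lift_perm (R : Type) (op : SemiGroup.com_law R) (x : R)
    (P : pred 'S_n.+1) (F : 'S_n.+1 -> R) j :
  \big[op/x]_(s | P s && (s i == j)) F s =
  \big[op/x]_(t | P (lift_perm i j t)) F (lift_perm i j t).
Proof.
rewrite (reindex_onto (lift_perm i j) perm_unlift) => [|s /andP[_ /eqP <-]].
  by apply: eq_bigl => t; rewrite lift_perm_id perm_unlift_lift !eqxx !andbT.
exact: lift_perm_unlift.
Qed.

End PermUnlift.

Lemma sum_avoiders_lift n (R : nmodType) (F : 'S_n.+1 -> R) :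
  \sum_(s in avoiders n.+1) F s =
  \sum_(t in avoiders n) \sum_(l < n.+1 | (l <= label t)%N) F (lift_perm ord_max l t).
Proof.
rewrite (partition_big (fun s : 'S_n.+1 => s ord_max) xpredT) //=.
under eq_bigr => l _.
  rewrite (reindex_lift_perm _ _ _ (fun s : 'S_n.+1 => s \in avoiders n.+1)).
  under eq_bigl => t do rewrite avoiders_lift -/(appendable t l) (appendableE t (ltn_ord l)).
  over.
rewrite (exchange_big_dep (fun t => t \in avoiders n)) /=; last by move=> l t _ /andP[].
by apply: eq_bigr => t tav; apply: eq_bigl => l; rewrite tav.
Qed.

Definition label_poly n : {poly rat} := \sum_(t in avoiders n) 'X^(label t).

Lemma label_poly0 : label_poly 0 = 1.
Proof.
rewrite /label_poly (eq_bigr (fun _ => 1)) => [|t _]; last first.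
  by have := label_le t; rewrite leqn0 => /eqP ->.
rewrite sumr_const (_ : avoiders 0 = [set: 'S_0]) ?cardsT ?card_Sn //.
by apply/setP => t; rewrite avoidersE inE.
Qed.

Lemma label_poly_at1 n : (label_poly n).[1] = #|avoiders n|%:R.
Proof.
rewrite /label_poly horner_sum (eq_bigr (fun _ => 1)) ?sumr_const // => t _.
by rewrite hornerXn expr1n.
Qed.

Lemma label_polyS n : (1 - 'X) * label_poly n.+1 =
  'X^2 * #|avoiders n|%:R + 'X * (1 - 2%:R * 'X) * label_poly n.
Proof.
rewrite /label_poly sum_avoiders_lift mulr_sumr.
under eq_bigr => t _.
  have -> : \sum_(l < n.+1 | (l <= label t)%N) 'X^(label (lift_perm ord_max l t)) =
      \sum_(l < (label t).+1) 'X^(child_label (label t) (inv_bound t) l) :> {poly rat}.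
    transitivity (\sum_(l < n.+1 | true && (l < (label t).+1)%N)
                   'X^(child_label (label t) (inv_bound t) l) : {poly rat}).
      by apply: eq_big => [l | l lK]; rewrite ?ltnS ?label_lift.
    symmetry; apply: (big_ord_widen_cond n.+1 xpredT
      (fun l => 'X^(child_label (label t) (inv_bound t) l) : {poly rat})).
    by rewrite ltnS label_le.
  rewrite sum_child_label ?inv_bound_le_label //; last exact: inv_bound_gt0.
  over.
rewrite big_split /= sumr_const mulr_sumr mulr_natr; congr (_ + _).
by apply: eq_bigr => t _; rewrite exprS; ring.
Qed.

Lemma snl_lift n l : (l <= n)%N ->
  snl n.+1 l.+1 = (\sum_(t in avoiders n) (l <= label t))%N.
Proof.
move=> ln.
have -> : snl n.+1 l.+1 = (\sum_(s in avoiders n.+1) (val (s ord_max) == l))%N.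
  rewrite /snl -sum1_card big_mkcond [RHS]big_mkcond; apply: eq_bigr => s _; rewrite inE.
  have -> : [exists i : 'I_n.+1, (val i == n) && (val (s i) == l)] = (val (s ord_max) == l).
    apply/existsP/idP => [[i /andP[/eqP ei si]] | si]; last by exists ord_max; rewrite eqxx.
    by rewrite (_ : i = ord_max) in si; last exact: val_inj.
  by case: (_ \in _); case: (_ == l).
rewrite sum_avoiders_lift; apply: eq_bigr => t _.
under eq_bigr => j _ do rewrite lift_perm_id.
case: (leqP l (label t)) => lK.
  rewrite (bigD1 (Ordinal (ln : (l < n.+1)%N))) //= eqxx big1 ?addn0 // => j /andP[_ jl].
  by apply/eqP; rewrite eqb0; apply: contra jl => /eqP jl; apply/eqP/val_inj.
by rewrite big1 // => j jK; apply/eqP; rewrite eqb0; apply: contraTneq jK => ->; rewrite -ltnNge.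
Qed.

Lemma hserS n : (1 - 'X) * hser n.+1 = 'X * #|avoiders n|%:R - 'X^2 * label_poly n.
Proof.
rewrite /hser big_add1 /=.
under eq_big_nat => l /andP[_ ln].
  rewrite (snl_lift (ltnSE ln)) natr_sum scaler_suml.
  over.
rewrite exchange_big /= mulr_sumr /label_poly mulr_sumr mulr_natr -sumr_const -sumrB.
apply: eq_bigr => t _; have Kn := label_le t.
rewrite (@big_cat_nat _ _ _ (label t).+1) //=.
rewrite [\sum_((label t).+1 <= l < n.+1) _]big1_seq ?addr0 => [|l]; last first.
  by rewrite mem_index_iota => /andP[_ /andP[Kl _]]; rewrite leqNgt Kl scale0r.
rewrite (eq_big_nat _ _ (F2 := fun l => 'X * 'X ^+ l)) => [|l /andP[_ lK]]; last first.
  by rewrite -ltnS lK scale1r exprS.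
by rewrite -mulr_sumr mulrCA sum_expr_telescope // expr0 !exprS; ring.
Qed.

(** * Formal power series *)

Definition series (R : Type) := nat -> R.

HB.instance Definition _ (R : choiceType) := Choice.copy (series R) (nat -> R).

Section SeriesRing.
Variable R : comNzRingType.
Implicit Types f g h : series R.

Definition series_add f g : series R := fun n => f n + g n.
Definition series_opp f : series R := fun n => - f n.
Definition series_mul f g : series R := fun n => \sum_(i < n.+1) f i * g (n - i)%N.
Definition series_one : series R := fun n => if n == 0%N then 1 else 0.

Lemma series_addA : associative series_add.
Proof. by move=> f g h; apply: funext => n; apply: addrA. Qed.

Lemma series_addC : commutative series_add.
Proof. by move=> f g; apply: funext => n; apply: addrC. Qed.

Lemma series_add0 : left_id (fun _ => 0) series_add.
Proof. by move=> f; apply: funext => n; apply: add0r. Qed.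

Lemma series_addN : left_inverse (fun _ => 0) series_opp series_add.
Proof. by move=> f; apply: funext => n; apply: addNr. Qed.

HB.instance Definition _ :=
  GRing.isZmodule.Build (series R) series_addA series_addC series_add0 series_addN.

Lemma series_mulE f g n : series_mul f g n = \sum_(0 <= i < n.+1) f i * g (n - i)%N.
Proof. by rewrite big_mkord. Qed.

Lemma series_mulC : commutative series_mul.
Proof.
move=> f g; apply: funext => n; rewrite /series_mul (reindex_inj rev_ord_inj) /=.
by apply: eq_bigr => i _; rewrite subKn 1?mulrC // -ltnS.
Qed.

Lemma series_mul1 : left_id series_one series_mul.
Proof.
move=> f; apply: funext => n; rewrite /series_mul big_ord_recl /= mul1r subn0.
by rewrite big1 ?addr0 // => i _; rewrite mul0r.
Qed.

Lemma series_mulDl : left_distributive series_mul series_add.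
Proof.
move=> f g h; apply: funext => n; rewrite /series_mul /series_add -big_split /=.
by apply: eq_bigr => i _; rewrite mulrDl.
Qed.

Lemma series_mulA : associative series_mul.
Proof.
move=> f g h; apply: funext => n; rewrite series_mulE [RHS]series_mulE.
pose F i k := f i * (g (k - i)%N * h (n - k)%N).
transitivity (\sum_(0 <= i < n.+1) \sum_(i <= k < n.+1) F i k).
  apply: eq_big_nat => i /andP[_ ilt]; rewrite series_mulE big_distrr /=.
  rewrite -[in RHS](add0n i) big_addn !add0n subSn //=; apply: eq_bigr => j _.
  by rewrite /F addnK addnC subnDA.
under eq_bigr do rewrite (big_nat_widenl _ 0) //.
rewrite (exchange_big_dep_nat xpredT) //=; apply: eq_big_nat => k /andP[_ klt].
rewrite series_mulE big_distrl (big_nat_widen _ _ _ _ _ klt) /=.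
by apply: eq_big => [i | i _]; rewrite ?ltnS // /F mulrA.
Qed.

Lemma series_one_neq0 : series_one != 0.
Proof.
apply/eqP => /(congr1 (fun f : series R => f 0%N)) /eqP.
by rewrite /series_one oner_eq0.
Qed.

HB.instance Definition _ := GRing.Zmodule_isComNzRing.Build (series R)
  series_mulA series_mulC series_mul1 series_mulDl series_one_neq0.

End SeriesRing.

Section SeriesCoef.
Variable R : comNzRingType.
Implicit Types f g : series R.

Lemma series_coefD f g n : (f + g) n = f n + g n. Proof. by []. Qed.
Lemma series_coefB f g n : (f - g) n = f n - g n. Proof. by []. Qed.
Lemma series_coef1 n : (1 : series R) n = (n == 0%N)%:R.
Proof. by case: n. Qed.

Lemma series_coef_nat k n :
  (k%:R : series R) n = if n == 0%N then k%:R else 0.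
Proof.
elim: k => [|k IH]; first by case: (n == 0%N).
by rewrite !mulrS series_coefD IH series_coef1; case: (n == 0%N); rewrite ?addr0.
Qed.

End SeriesCoef.

Lemma series_coefM (R : comNzRingType) (f g : series R) n :
  (f * g) n = \sum_(0 <= i < n.+1) f i * g (n - i)%N.
Proof. exact: series_mulE. Qed.

Lemma series_coefM_low (R : comNzRingType) (f g : series R) n :
  (forall j, (j < n)%N -> f j = 0) -> (g * f) n = g 0%N * f n.
Proof.
move=> f_low; rewrite series_coefM big_nat_recl // subn0 big1_seq ?addr0 // => i.
by rewrite mem_index_iota => /andP[_ ilt]; rewrite f_low ?mulr0 //; lia.
Qed.

Lemma series_coefM_eq0 (R : comNzRingType) (f g : series R) n :
  (forall j, (j <= n)%N -> f j = 0) -> (g * f) n = 0.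
Proof. by move=> f0; rewrite series_coefM_low => [|j /ltnW/f0 //]; rewrite f0 ?mulr0. Qed.

Lemma series_mul_eq0 (R : idomainType) (c d : series R) :
  c 0%N != 0 -> c * d = 0 -> d = 0.
Proof.
move=> c0 cd0; suff d_low n : forall j, (j < n)%N -> d j = 0.
  by apply: funext => n; apply: (d_low n.+1).
elim: n => [// | n IH] j; rewrite ltnS leq_eqVlt => /predU1P[-> | /IH //].
have /eqP := congr1 (fun f : series R => f n) cd0.
by rewrite series_coefM_low // mulf_eq0 (negbTE c0) => /eqP.
Qed.

Lemma series_mulfI (R : idomainType) (c : series R) : c 0%N != 0 -> injective ( *%R c).
Proof.
by move=> c0 d d' /eqP; rewrite -subr_eq0 -mulrBr => /eqP /(series_mul_eq0 c0) /subr0_eq.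
Qed.

Lemma series_sqr_inj (R : idomainType) (a b : series R) :
  a 0%N + b 0%N != 0 -> a * a = b * b -> a = b.
Proof.
move=> ab0 e; apply/subr0_eq/(@series_mul_eq0 _ (a + b)) => //.
by rewrite mulrDl !mulrBr e mulrC; ring.
Qed.

Section SeriesSqrt.
Variables (R : comUnitRingType) (f : series R).
Hypotheses (f0 : f 0%N = 1) (two_unit : (2%:R : R) \is a GRing.unit).

(* Coefficient [m > 0] of a square root [q] is forced by [f m = 2 q_0 q_m +
   sum_(0 < i < m) q_i q_(m-i)]. *)
Definition sqrt_step (q : nat -> R) m := 2%:R^-1 * (f m - \sum_(1 <= i < m) q i * q (m - i)%N).

Fixpoint sqrt_prefix n : nat -> R :=
  if n is m.+1 then fun i => if i == m.+1 then sqrt_step (sqrt_prefix m) m.+1 else sqrt_prefix m i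
  else fun i => (i == 0%N)%:R.

Definition series_sqrt : series R := fun n => sqrt_prefix n n.

Lemma sqrt_prefixE n i : (i <= n)%N -> sqrt_prefix n i = series_sqrt i.
Proof.
elim: n => [|n IH]; first by rewrite leqn0 => /eqP ->.
by rewrite leq_eqVlt => /predU1P[-> // | ilt]; rewrite /= (ltn_eqF ilt) IH.
Qed.

Lemma series_sqrtS m : series_sqrt m.+1 = sqrt_step series_sqrt m.+1.
Proof.
rewrite /series_sqrt /= eqxx /sqrt_step; congr (_ * (_ - _)).
by apply: eq_big_nat => i /andP[i1 im]; rewrite !sqrt_prefixE //; lia.
Qed.

Lemma series_sqrtK : series_sqrt * series_sqrt = f.
Proof.
apply: funext => -[|m]; first by rewrite series_coefM big_nat1 mulr1.
rewrite series_coefM big_nat_recl // big_nat_recr //= subn0 subnn.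
rewrite mul1r mulr1 series_sqrtS /sqrt_step big_add1 /=.
set M := \sum_(0 <= i < m) _; set h := 2%:R^-1.
transitivity (2%:R * h * (f m.+1 - M) + M); first by ring.
by rewrite mulrV // mul1r subrK.
Qed.

End SeriesSqrt.

Lemma two_poly_neq0 : (2%:R : {poly rat}) != 0.
Proof. by rewrite -polyC_natr polyC_eq0. Qed.

Lemma one_subX_neq0 : (1 - 'X : {poly rat}) != 0.
Proof.
apply/eqP => /(congr1 (horner^~ 0)) /eqP.
by rewrite !hornerE oner_eq0.
Qed.

Lemma two_poly_unit : (2%:R : {poly rat}) \is a GRing.unit.
Proof. by rewrite poly_unitE -polyC_natr size_polyC coefC /= unitfE. Qed.

HB.instance Definition _ := GRing.ComNzRing.copy fps (series {poly rat}).

Lemma coef_fconstM c (f : fps) n : (fconst c * f) n = c * f n.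
Proof.
rewrite series_coefM big_nat_recl // subn0 big1_seq ?addr0 // => i _.
by rewrite /fconst /= mul0r.
Qed.

Lemma fconst_is_zmod_morphism : zmod_morphism fconst.
Proof. by move=> a b; apply: funext => -[|n]; rewrite series_coefB /fconst /= ?subr0. Qed.

Lemma fconst_is_monoid_morphism : monoid_morphism fconst.
Proof.
split=> // a b; apply: funext => n.
by rewrite coef_fconstM /fconst; case: (n == 0%N); rewrite ?mulr0.
Qed.

HB.instance Definition _ := GRing.isZmodMorphism.Build _ _ fconst fconst_is_zmod_morphism.
HB.instance Definition _ := GRing.isMonoidMorphism.Build _ _ fconst fconst_is_monoid_morphism.

Lemma coef_fUM (f : fps) n : (fU * f) n = 'X * f n.
Proof. exact: coef_fconstM. Qed.

Lemma fconst1BX : fconst (1 - 'X) = 1 - fU.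
Proof. by rewrite rmorphB rmorph1. Qed.

Lemma coef_fXM (f : fps) n : (fX * f) n = if n is m.+1 then f m else 0.
Proof.
case: n => [|m]; first by rewrite series_coefM big_nat1 /fX mul0r.
rewrite series_coefM big_nat_recl // big_nat_recl // big1_seq => [|i _].
  by rewrite /fX /= mul0r mul1r subSS subn0 add0r addr0.
by rewrite /fX /= mul0r.
Qed.

Lemma fX_mulI : injective ( *%R fX).
Proof.
move=> f g /= e; apply: funext => n.
by have := congr1 (fun h : fps => h n.+1) e; rewrite !coef_fXM.
Qed.

Lemma fat1_is_zmod_morphism : zmod_morphism fat1.
Proof. by move=> f g; apply: funext => n; rewrite /fat1 !series_coefB hornerD hornerN polyCB. Qed.

Lemma fat1_is_monoid_morphism : monoid_morphism fat1.
Proof.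
split=> [|f g]; apply: funext => n; rewrite /fat1.
  by rewrite series_coef1 -polyC_natr hornerC.
rewrite !series_coefM horner_sum rmorph_sum; apply: eq_bigr => i _.
by rewrite hornerM rmorphM.
Qed.

HB.instance Definition _ := GRing.isZmodMorphism.Build _ _ fat1 fat1_is_zmod_morphism.
HB.instance Definition _ := GRing.isMonoidMorphism.Build _ _ fat1 fat1_is_monoid_morphism.

Lemma fat1_fconst c : fat1 (fconst c) = fconst (c.[1])%:P.
Proof. by apply: funext => n; rewrite /fat1 /fconst; case: (n == 0%N); rewrite ?horner0. Qed.

Lemma fat1_fX : fat1 fX = fX.
Proof. by apply: funext => n; rewrite /fat1 /fX; case: (n == 1%N); rewrite ?hornerC ?horner0. Qed.

Lemma fat1_fU : fat1 fU = 1.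
Proof. by rewrite fat1_fconst hornerX. Qed.

Lemma fat1_id f : fat1 (fat1 f) = fat1 f.
Proof. by apply: funext => n; rewrite /fat1 hornerC. Qed.

Lemma fps_homogeneous_eq0 (W E A B P D : fps) (c : {poly rat}) :
    c != 0 -> D 0%N != 0 ->
    fconst c * W = fX * (B * E - A * W) -> P * fat1 W = D * E ->
  E = 0.
Proof.
move=> c0 D0 eqW eqE.
suff low n : forall j, (j < n)%N -> W j = 0 /\ E j = 0.
  by apply: funext => n; have [] := low n.+1 n (ltnSn n).
elim: n => [// | n IH] j; rewrite ltnS leq_eqVlt => /predU1P[-> | /IH //].
have Wn : W n = 0.
  have /eqP := congr1 (fun f : fps => f n) eqW.
  rewrite coef_fconstM coef_fXM; case: n IH => [|n] IH /=.
    by rewrite mulf_eq0 (negbTE c0) => /eqP.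
  rewrite series_coefB !series_coefM_eq0 ?subrr => [| k kn | k kn].
  - by rewrite mulf_eq0 (negbTE c0) => /eqP.
  - by have [] := IH k (leq_ltn_trans kn (ltnSn n)).
  - by have [] := IH k (leq_ltn_trans kn (ltnSn n)).
split=> //; have /eqP := congr1 (fun f : fps => f n) eqE.
rewrite series_coefM_eq0 => [|k kn]; last first.
  by rewrite /fat1; case: (ltngtP k n) kn => // [/IH[-> _] | ->] _; rewrite ?Wn horner0.
rewrite eq_sym series_coefM_low => [|k /IH[]//].
by rewrite mulf_eq0 (negbTE D0) => /eqP.
Qed.

Definition schroder_disc : fps := 1 - 6%:R * fX + fX * fX.

Lemma schroder_disc0 : schroder_disc 0%N = 1.
Proof.
have -> : schroder_disc = 1 - fX * (6%:R - fX) by rewrite /schroder_disc; ring.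
by rewrite series_coefB coef_fXM subr0.
Qed.

Lemma is_sqrt_schroderP Q : is_sqrt_schroder Q <-> Q 0%N = 1 /\ Q * Q = schroder_disc.
Proof.
rewrite /is_sqrt_schroder /schroder_disc -(rmorph_nat fconst 6).
split=> -[Q0 QQ]; split=> //; first exact: funext.
by move=> n; exact: (congr1 (fun f : fps => f n) QQ).
Qed.

(** * The functional equation *)

Section FunctionalEquation.
Variables (H F Q : fps).
Hypotheses (H0 : H 0%N = 0) (F0 : F 0%N = 1).
Hypothesis HS : forall n, (1 - 'X) * H n.+1 = 'X * ((F n).[1])%:P - 'X^2 * F n.
Hypothesis FS : forall n,
  (1 - 'X) * F n.+1 = 'X^2 * ((F n).[1])%:P + 'X * (1 - 2%:R * 'X) * F n.
Hypotheses (Q0 : Q 0%N = 1) (QQ : Q * Q = schroder_disc).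

Let C := fat1 F.
Let T := 1 - fX - Q.
Let K := 1 - fU - fX * fU + 2%:R * fX * fU ^+ 2.

Lemma series_eqH : (1 - fU) * H = fX * (fU * C - fU ^+ 2 * F).
Proof.
rewrite -fconst1BX; apply: funext => -[|n]; first by rewrite coef_fconstM H0 mulr0 coef_fXM.
rewrite coef_fconstM HS coef_fXM series_coefB [fU ^+ 2]expr2 -mulrA !coef_fUM /C /fat1.
by rewrite mulrA -expr2.
Qed.

Lemma kernel_eqF : K * F = (1 - fU) + fX * fU ^+ 2 * C.
Proof.
have eqF : (1 - fU) * F = (1 - fU) + fX * (fU ^+ 2 * C + fU * ((1 - 2%:R * fU) * F)).
  rewrite -fconst1BX; apply: funext => -[|n].
    by rewrite coef_fconstM series_coefD coef_fXM F0 addr0 /fconst mulr1.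
  rewrite coef_fconstM FS series_coefD coef_fXM /fconst /= add0r series_coefD.
  rewrite -(rmorph_nat fconst 2) -(rmorph1 fconst) /fU -!rmorphXn -!rmorphM -!rmorphB.
  by rewrite !coef_fconstM /C /fat1; ring.
transitivity ((1 - fU) * F - fX * (fU * ((1 - 2%:R * fU) * F))); first by rewrite /K; ring.
by rewrite eqF; ring.
Qed.

Lemma T_sqr : T * T = 2%:R * (1 - fX) * T - 4%:R * fX.
Proof.
apply/eqP; rewrite -subr_eq0; apply/eqP.
transitivity (Q * Q - schroder_disc); first by rewrite /T /schroder_disc; ring.
by rewrite QQ subrr.
Qed.

Lemma fat1_Q : fat1 Q = Q.
Proof.
apply: series_sqr_inj; first by rewrite /fat1 Q0 hornerC -polyC1 -polyCD polyC_eq0.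
by rewrite -rmorphM QQ /schroder_disc !rmorphD !rmorphN !rmorphM rmorph1 rmorph_nat /= fat1_fX.
Qed.

Lemma fat1_K : fat1 K = fX.
Proof.
by rewrite /K !(rmorphB, rmorphD, rmorphM, rmorphXn, rmorph1, rmorph_nat) /= fat1_fX fat1_fU; ring.
Qed.

(* [W = 0] is the closed form [F = N / S] and [E = 0] the one of [F(x,1)]. *)
Let S := 2%:R - T - 4%:R * fX * fU.
Let N := 2%:R - T - 2%:R * fX * fU - fX * fU * T.
Let W := S * F - N.
Let E := 2%:R * C - 2%:R - T.

Lemma fat1_E : fat1 E = E.
Proof. by rewrite /E !rmorphB rmorphM rmorph_nat rmorph1 /= /C fat1_id fat1_fX fat1_Q. Qed.

Lemma coef0_S : S 0%N = 2%:R.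
Proof.
have -> : S = 2%:R - T - fX * (4%:R * fU) by rewrite /S; ring.
by rewrite !series_coefB coef_fXM /T !series_coefB series_coef_nat series_coef1 Q0 /fX /=; ring.
Qed.

Lemma kernel_eqW : 2%:R * K * W = fX * fU ^+ 2 * S * E.
Proof.
transitivity (2%:R * S * (K * F - (1 - fU + fX * fU ^+ 2 * C))
  - fX * fU ^+ 2 * (T * T - (2%:R * (1 - fX) * T - 4%:R * fX)) + fX * fU ^+ 2 * S * E).
  by rewrite /W /S /N /E /K; ring.
by rewrite kernel_eqF T_sqr !subrr !mulr0 subr0 add0r.
Qed.

Lemma F_at1_closed_form : 2%:R * C = 2%:R + T.
Proof.
suff E0 : E = 0 by apply/eqP; rewrite -subr_eq0 -E0 /E; apply/eqP; ring.
apply: (@fps_homogeneous_eq0 W E (2%:R * fU * (2%:R * fU - 1)) (fU ^+ 2 * S) 2%:R (fat1 S)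
  (2%:R * (1 - 'X))).
- by rewrite mulf_neq0 ?two_poly_neq0 ?one_subX_neq0.
- by rewrite /fat1 coef0_S -polyC_natr hornerC polyC_natr two_poly_neq0.
- rewrite rmorphM rmorphB rmorph1 rmorph_nat -/fU.
  transitivity (2%:R * K * W - fX * (2%:R * fU * (2%:R * fU - 1) * W)).
    by rewrite /K; ring.
  by rewrite kernel_eqW; ring.
- apply: fX_mulI; have := congr1 fat1 kernel_eqW.
  rewrite !(rmorphM, rmorphXn, rmorph_nat) /= fat1_K fat1_fX fat1_fU fat1_E => e.
  by transitivity (2%:R * fX * fat1 W); [ring | rewrite e; ring].
Qed.

Lemma H_closed_form :
  2%:R * (1 - fU * (1 + fX) + 2%:R * fU * fU * fX) * H
    = 2%:R * fU * fX * (1 - fU) * (1 - fU * fX) + fU * fX * (1 - fU * (1 - fU) * fX) * T.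
Proof.
apply: (@series_mulfI _ (1 - fU)); first by rewrite -fconst1BX /fconst one_subX_neq0.
transitivity (2%:R * K * ((1 - fU) * H - fX * (fU * C - fU ^+ 2 * F))
  + fX * fU * (K - fX * fU ^+ 3) * (2%:R * C - (2%:R + T))
  - 2%:R * fX * fU ^+ 2 * (K * F - (1 - fU + fX * fU ^+ 2 * C))
  + (1 - fU) * (2%:R * fU * fX * (1 - fU) * (1 - fU * fX)
                + fU * fX * (1 - fU * (1 - fU) * fX) * T)).
  by rewrite /K /T; ring.
by rewrite series_eqH F_at1_closed_form kernel_eqF !subrr !mulr0 addr0 subr0 add0r.
Qed.

Lemma H_at1_closed_form : 2%:R * fat1 H = T.
Proof.
apply: fX_mulI; have := congr1 fat1 H_closed_form.
rewrite !(rmorphM, rmorphD, rmorphN, rmorph1, rmorph_nat) /= fat1_fX fat1_fU fat1_Q => e.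
transitivity (2%:R * (1 - 1 * (1 + fX) + 2%:R * 1 * 1 * fX) * fat1 H); first ring.
by rewrite e /T; ring.
Qed.

Lemma coef_F_at1 n : (0 < n)%N -> ((F n).[1])%:P = 2%:R^-1 * T n.
Proof.
case: n => // n _; have := congr1 (fun f : fps => f n.+1) F_at1_closed_form.
rewrite -(rmorph_nat fconst 2) series_coefD coef_fconstM /fconst /= add0r => <-.
by rewrite mulrA mulVr ?mul1r ?two_poly_unit.
Qed.

End FunctionalEquation.

Theorem corollary5p3 :
  (exists Q : fps, is_sqrt_schroder Q) /\
  (forall Q : fps, is_sqrt_schroder Q ->
    (* 2(1 - u(1+x) + 2u^2 x) h(x,u)
         = 2ux(1-u)(1-ux) + ux(1 - u(1-u)x)(1 - x - Q) *)
    (ftwo * (fone - fU * (fone + fX) + ftwo * fU * fU * fX) * hser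
      == ftwo * fU * fX * (fone - fU) * (fone - fU * fX)
         + fU * fX * (fone - fU * (fone - fU) * fX) * (fone - fX - Q))%fps
    /\
    (* h(x,1) = (1 - x - Q)/2 *)
    (ftwo * fat1 hser == fone - fX - Q)%fps
    /\
    (* the number of avoiders of size n is the n-th large Schroeder number,
       i.e. the coefficient of x^n in (1 - x - Q)/2 *)
    (forall n : nat, (1 <= n)%N ->
       ((#|avoiders n|)%:R : {poly rat}) = 2%:R^-1 * (fone - fX - Q)%fps n)).
Proof.
have at1 n : ((label_poly n).[1])%:P = #|avoiders n|%:R by rewrite label_poly_at1 polyC_natr.
have hser0 : hser 0%N = 0 by rewrite /hser big_geq.
have hS n : (1 - 'X) * hser n.+1 = 'X * ((label_poly n).[1])%:P - 'X^2 * label_poly n.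
  by rewrite at1 hserS.
have FS n : (1 - 'X) * label_poly n.+1 =
    'X^2 * ((label_poly n).[1])%:P + 'X * (1 - 2%:R * 'X) * label_poly n.
  by rewrite at1 label_polyS.
split.
  exists (series_sqrt schroder_disc); apply/is_sqrt_schroderP.
  by split; last apply: series_sqrtK; rewrite ?schroder_disc0 ?two_poly_unit.
move=> Q /is_sqrt_schroderP[Q0 QQ]; have two : ftwo = 2%:R := rmorph_nat fconst 2.
split; [|split].
- move=> n; rewrite two.
  exact: (congr1 (fun f : fps => f n) (H_closed_form hser0 label_poly0 hS FS Q0 QQ)).
- move=> n; rewrite two.
  exact: (congr1 (fun f : fps => f n) (H_at1_closed_form hser0 label_poly0 hS FS Q0 QQ)).
- by move=> n n1; rewrite -at1 (coef_F_at1 label_poly0 FS Q0 QQ n1).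
Qed.
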